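(* Let $A$ be a $\boldsymbol{\mathit{ba}\ell}$-algebra, $a\in A$ and $s\in\mathbb R$ with $a+s\ge0$. Then the set $\{rx_{\lnot I}\mid r\in\mathbb R,\ I\in{\sf Arch}(A),\ (a+s-r)^-\in I\}$ is bounded above in $D(\mathbb R[B])$ (by $\|a\|+s+1$), so its join exists there, and the element $$-s+\bigvee\{rx_{\lnot I}\mid r\in\mathbb R,\ I\in{\sf Arch}(A),\ (a+s-r)^-\in I\}$$ does not depend on the choice of $s$ with $a+s\ge 0$. Hence $\alpha:A\to D(\mathbb R[B])$ given by this formula is a well-defined map.
   Context: A $\boldsymbol{\mathit{ba}\ell}$-algebra is a commutative unital lattice-ordered algebra $A$ over $\mathbb R$ that is bounded (for every $a\in A$ there is an integer $n\ge1$ with $a\le n\cdot1$) and archimedean (if $na\le b$ for all $n\ge1$ then $a\le0$); reals $r$ are identified with $r\cdot1$. For $a\in A$: $a^+=a\vee0$, $a^-=(-a)\vee0$, $|a|=a\vee(-a)$, $\|a\|=\inf\{r\in\mathbb R\mid |a|\le r\}$. An $\ell$-ideal is a ring ideal $I$ with $|a|\le|b|$, $b\in I\Rightarrow a\in I$; it is archimedean if $A/I$ is archimedean. ${\sf Arch}(A)$ is the set of archimedean $\ell$-ideals ordered by inclusion; it is a bounded distributive lattice (indeed a frame) with meet $\cap$ and with join $I\vee J$ the least archimedean $\ell$-ideal containing $I\cup J$. $B$ is the free boolean extension of the bounded distributive lattice ${\sf Arch}(A)$ (a boolean algebra generated by ${\sf Arch}(A)$ as a bounded sublattice, such that every bounded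 lattice homomorphism from ${\sf Arch}(A)$ to a boolean algebra extends uniquely to a boolean homomorphism); ${\sf Arch}(A)\subseteq B$ and $\lnot$ denotes complement in $B$. For a boolean algebra $B$, $\mathbb R[B]$ is the quotient of the polynomial ring $\mathbb R[x_e\mid e\in B]$ by the ideal generated by $x_{e\wedge f}-x_ex_f$, $x_{e\vee f}-(x_e+x_f-x_ex_f)$, $x_{\lnot e}-(1-x_e)$, $x_0$ ($e,f\in B$); it is a $\boldsymbol{\mathit{ba}\ell}$-algebra and $e\mapsto x_e$ is a boolean isomorphism onto its idempotents. $D(\mathbb R[B])$ is its Dedekind completion: the (unique up to isomorphism) Dedekind complete $\boldsymbol{\mathit{ba}\ell}$-algebra containing $\mathbb R[B]$ as a $\boldsymbol{\mathit{ba}\ell}$-subalgebra such that each of its elements is a join of elements of $\mathbb R[B]$. *)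

From HB Require Import structures.
From mathcomp Require Import all_boot all_order all_algebra.
From mathcomp Require Import classical_sets reals.

Set Implicit Arguments.
Unset Strict Implicit.
Unset Printing Implicit Defensive.

Import Order.TTheory GRing.Theory Num.Theory.
Local Open Scope ring_scope.

(* A commutative unital R-algebra is a commutative ring [A] together   *)
(* with a unital ring morphism [sc : R -> A] (scalar r * a := sc r * a)*)

Section BalDef.
Variable R : realType.
Variable A : comPzRingType.
Variable sc : R -> A.
Variables (join meet : A -> A -> A).

Definition bal_le (x y : A) : Prop := join x y = y.

Record isBal : Prop := {
  sc_add : forall r s, sc (r + s) = sc r + sc s;
  sc_mul : forall r s, sc (r * s) = sc r * sc s;
  sc_one : sc 1 = 1;
  joinC : forall x y, join x y = join y x;
  meetC : forall x y, meet x y = meet y x;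
  joinA : forall x y z, join x (join y z) = join (join x y) z;
  meetA : forall x y z, meet x (meet y z) = meet (meet x y) z;
  join_meet : forall x y, join x (meet x y) = x;
  meet_join : forall x y, meet x (join x y) = x;
  le_add : forall x y z, bal_le x y -> bal_le (x + z) (y + z);
  le_mul : forall x y, bal_le 0 x -> bal_le 0 y -> bal_le 0 (x * y);
  le_scale : forall r x, 0 <= r -> bal_le 0 x -> bal_le 0 (sc r * x);
  bal_bounded : forall x, exists n : nat, bal_le x (n.+1)%:R;
  bal_archimedean : forall x y,
      (forall n : nat, bal_le (x *+ n.+1) y) -> bal_le x 0
}.
End BalDef.

Record balAlg (R : realType) := BalAlg {
  bcar :> comPzRingType;
  bsc : R -> bcar;
  bjoin : bcar -> bcar -> bcar;
  bmeet : bcar -> bcar -> bcar;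
  bal_axioms : isBal bsc bjoin bmeet
}.

Section BalOps.
Variable R : realType.
Variable A : balAlg R.

Definition ble (x y : A) : Prop := bal_le (@bjoin R A) x y.
Definition bpos (x : A) : A := bjoin x 0.
Definition bneg (x : A) : A := bjoin (- x) 0.
Definition babs (x : A) : A := bjoin x (- x).
Definition bnorm (x : A) : R := inf [set r : R | ble (babs x) (bsc A r)].

Definition isJoin (S : A -> Prop) (z : A) : Prop :=
  (forall y, S y -> ble y z) /\ (forall u, (forall y, S y -> ble y u) -> ble z u).

Definition dedekind_complete : Prop :=
  forall S : A -> Prop, (exists y, S y) -> (exists u, forall y, S y -> ble y u) ->
    exists z, isJoin S z.

Definition l_ideal (I : A -> Prop) : Prop :=
  [/\ I 0,
      (forall x y, I x -> I y -> I (x + y)),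
      (forall x y, I y -> I (x * y)) &
      (forall x y, ble (babs x) (babs y) -> I y -> I x)].

(* archimedean ℓ-ideal: A/I archimedean.  In A/I, [x] <= [y] iff
   [join x y] = [y] iff join x y - y \in I. *)
Definition arch_ideal (I : A -> Prop) : Prop :=
  l_ideal I /\
  (forall x y, (forall n : nat, I (bjoin (x *+ n.+1) y - y)) -> I (bjoin x 0 - 0)).

Definition archT : Type := {I : A -> Prop | arch_ideal I}.

Definition arch_join_set (I J : A -> Prop) : A -> Prop :=
  fun x => forall K, arch_ideal K -> (forall y, I y -> K y) -> (forall y, J y -> K y) -> K x.

End BalOps.

Definition arch_lat_hom (R : realType) (A : balAlg R) (d : Order.disp_t)
    (C : tbDistrLatticeType d) (f : archT A -> C) : Prop :=
  [/\ (forall I J K : archT A,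
         (forall x, sval K x <-> (sval I x /\ sval J x)) -> f K = Order.meet (f I) (f J)),
      (forall I J K : archT A,
         (forall x, sval K x <-> arch_join_set (sval I) (sval J) x) ->
         f K = Order.join (f I) (f J)),
      (forall K : archT A, (forall x, sval K x <-> x = 0) -> f K = Order.bottom) &
      (forall K : archT A, (forall x, sval K x) -> f K = Order.top)].

Definition bool_hom (d1 d2 : Order.disp_t) (B : ctbDistrLatticeType d1)
    (C : ctbDistrLatticeType d2) (g : B -> C) : Prop :=
  [/\ (forall x y, g (Order.meet x y) = Order.meet (g x) (g y)),
      (forall x y, g (Order.join x y) = Order.join (g x) (g y)),
      g Order.bottom = Order.bottom & g Order.top = Order.top].

Definition free_bool_ext (R : realType) (A : balAlg R) (dB : Order.disp_t)
    (B : ctbDistrLatticeType dB) (e : archT A -> B) : Prop :=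
  [/\ injective e,
      arch_lat_hom e,
      (forall P : B -> Prop, (forall I, P (e I)) ->
         (forall x y, P x -> P y -> P (Order.meet x y)) ->
         (forall x y, P x -> P y -> P (Order.join x y)) ->
         (forall x, P x -> P (Order.compl x)) ->
         P Order.bottom -> P Order.top -> forall x, P x) &
      (forall (dC : Order.disp_t) (C : ctbDistrLatticeType dC) (f : archT A -> C),
         arch_lat_hom f ->
         exists g : B -> C, [/\ bool_hom g, (forall I, g (e I) = f I) &
           (forall g' : B -> C, bool_hom g' -> (forall I, g' (e I) = f I) ->
              forall x, g' x = g x)])].

Definition rb_rel (dB : Order.disp_t) (B : ctbDistrLatticeType dB)
    (C : comPzRingType) (x : B -> C) : Prop :=
  [/\ (forall e f, x (Order.meet e f) = x e * x f),
      (forall e f, x (Order.join e f) = x e + x f - x e * x f),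
      (forall e, x (Order.compl e) = 1 - x e) &
      x Order.bottom = 0].

Definition ring_hom (C1 C2 : comPzRingType) (h : C1 -> C2) : Prop :=
  [/\ (forall a b, h (a + b) = h a + h b),
      (forall a b, h (a * b) = h a * h b) & h 1 = 1].

Definition unital_sc (R : realType) (C : comPzRingType) (sc : R -> C) : Prop :=
  [/\ (forall r s, sc (r + s) = sc r + sc s),
      (forall r s, sc (r * s) = sc r * sc s) & sc 1 = 1].

(* RB (with x : B -> RB) is R[B]: the commutative R-algebra presented by the
   generators x_e (e in B) and the relations rb_rel, i.e. the quotient of the
   polynomial ring R[x_e | e in B] by the ideal generated by the relations
   (characterized by its universal property); it carries its baℓ-structure. *)
Definition is_RB (R : realType) (dB : Order.disp_t) (B : ctbDistrLatticeType dB)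
    (RB : balAlg R) (x : B -> RB) : Prop :=
  rb_rel x /\
  (forall (C : comPzRingType) (scC : R -> C), unital_sc scC ->
   forall f : B -> C, rb_rel f ->
     exists h : RB -> C,
       [/\ ring_hom h, (forall r, h (bsc RB r) = scC r), (forall e, h (x e) = f e) &
         (forall h' : RB -> C, ring_hom h' -> (forall r, h' (bsc RB r) = scC r) ->
            (forall e, h' (x e) = f e) -> forall y, h' y = h y)]).

Definition is_dedekind_completion (R : realType) (S D : balAlg R) (j : S -> D) : Prop :=
  [/\ dedekind_complete D,
      injective j /\ ring_hom j,
      (forall r, j (bsc S r) = bsc D r),
      (forall x y, j (bjoin x y) = bjoin (j x) (j y) /\ j (bmeet x y) = bmeet (j x) (j y)) &
      (forall d : D, exists T : D -> Prop,
          (forall y, T y -> exists u, y = j u) /\ isJoin T d)].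

Definition alpha_set (R : realType) (A : balAlg R) (dB : Order.disp_t)
    (B : ctbDistrLatticeType dB) (e : archT A -> B) (RB D : balAlg R)
    (x : B -> RB) (j : RB -> D) (a : A) (s : R) : D -> Prop :=
  fun y => exists (r : R) (I : archT A),
    sval I (bneg (a + bsc A s - bsc A r)) /\
    y = j (bsc RB r * x (Order.compl (e I))).

From Pilot Require Import Defs.
From HB Require Import structures.
From mathcomp Require Import all_boot all_order all_algebra.
From mathcomp Require Import classical_sets reals.
From mathcomp Require Import ring lra.
Import Order.TTheory GRing.Theory Num.Theory.
Local Open Scope ring_scope.
Set Implicit Arguments.
Unset Strict Implicit.

(* Write X_I for the idempotent x_{~I} of D(R[B]); it satisfies 0 <= X_I <= 1.
   The set S_s = { r X_I | (a + s - r)^- in I } contains every real r with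
   r <= a + s, in particular 0 (take I = 0, so that X_I = 1), and it is
   bounded by ||a|| + s + 1: an element r X_I with r beyond that bound has
   (a + s - r)^- above a positive real, which forces I = A and X_I = 0 (when
   A is the zero algebra, so is D, and there is nothing to prove).  Dedekind
   completeness then gives the join of S_s.  For s <= s' with t = s' - s,
   the sets are related by r X_I in S_s' iff (r - t) X_I in S_s, whence
   sup S_s' = t + sup S_s, i.e. -s + sup S_s = -s' + sup S_s'. *)

Notation "x <=: y" := (ble x y) (at level 70, no associativity).

Section BalOrder.
Variables (R : realType) (A : balAlg R).
Local Notation ax := (bal_axioms A).
Local Notation J := (@bjoin R A).
Local Notation M := (@bmeet R A).
Local Notation sc := (@bsc R A).

Lemma bjoinxx (x : A) : J x x = x.
Proof. by have := Defs.join_meet ax x (J x x); rewrite (Defs.meet_join ax). Qed.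

Lemma bmeetxx (x : A) : M x x = x.
Proof. by have := Defs.meet_join ax x (M x x); rewrite (Defs.join_meet ax). Qed.

Lemma ble_refl (x : A) : x <=: x.
Proof. exact: bjoinxx. Qed.

Lemma ble_trans (y x z : A) : x <=: y -> y <=: z -> x <=: z.
Proof. by rewrite /ble /bal_le => h1 h2; rewrite -h2 (Defs.joinA ax) h1. Qed.
Arguments ble_trans y {x z}.

Lemma ble_anti (x y : A) : x <=: y -> y <=: x -> x = y.
Proof. by rewrite /ble /bal_le => h1 h2; rewrite -h1 (Defs.joinC ax). Qed.

Lemma bjoin_l (x y : A) : x <=: J x y.
Proof. by rewrite /ble /bal_le (Defs.joinA ax) bjoinxx. Qed.

Lemma bjoin_r (x y : A) : y <=: J x y.
Proof. by rewrite (Defs.joinC ax); exact: bjoin_l. Qed.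

Lemma bjoin_lub (x y z : A) : x <=: z -> y <=: z -> J x y <=: z.
Proof. by rewrite /ble /bal_le => h1 h2; rewrite -(Defs.joinA ax) h2 h1. Qed.

Lemma bleM (x y : A) : x <=: y <-> M x y = x.
Proof.
rewrite /ble /bal_le; split=> h; first by rewrite -h (Defs.meet_join ax).
by rewrite -h (Defs.joinC ax) (Defs.meetC ax) (Defs.join_meet ax).
Qed.

Lemma bmeet_l (x y : A) : M x y <=: x.
Proof. by apply/bleM; rewrite (Defs.meetC ax) (Defs.meetA ax) bmeetxx. Qed.

Lemma bmeet_r (x y : A) : M x y <=: y.
Proof. by rewrite (Defs.meetC ax); exact: bmeet_l. Qed.

Lemma bmeet_glb (x y z : A) : z <=: x -> z <=: y -> z <=: M x y.
Proof. by move=> /bleM h1 /bleM h2; apply/bleM; rewrite (Defs.meetA ax) h1 h2. Qed.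

Lemma bmeet_unique (x y g : A) : g <=: x -> g <=: y ->
  (forall w, w <=: x -> w <=: y -> w <=: g) -> g = M x y.
Proof.
move=> h1 h2 h3; apply: ble_anti; first exact: bmeet_glb.
by apply: h3; [exact: bmeet_l | exact: bmeet_r].
Qed.

Lemma ble_add (z x y : A) : x <=: y -> x + z <=: y + z.
Proof. exact: (Defs.le_add ax). Qed.

Lemma ble_addl (z x y : A) : x <=: y -> z + x <=: z + y.
Proof. by rewrite ![z + _]addrC; exact: ble_add. Qed.

Lemma ble_addK (z x y : A) : x + z <=: y + z -> x <=: y.
Proof. by move/(ble_add (- z)); rewrite !addrK. Qed.

Lemma subge0 (x y : A) : 0 <=: y - x <-> x <=: y.
Proof.
split=> h; first by have := ble_add x h; rewrite add0r subrK.
by have := ble_add (- x) h; rewrite subrr.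
Qed.

Lemma ble_opp (x y : A) : x <=: y -> - y <=: - x.
Proof. by move/subge0=> h; apply/subge0; rewrite opprK addrC. Qed.

Lemma bge0D (x y : A) : 0 <=: x -> 0 <=: y -> 0 <=: x + y.
Proof. by move=> h1 h2; apply: ble_trans h2 _; rewrite -{1}(add0r y); exact: ble_add. Qed.

Lemma bmul_ge0 (x y : A) : 0 <=: x -> 0 <=: y -> 0 <=: x * y.
Proof. exact: (Defs.le_mul ax). Qed.

Lemma mix_le (w u v z : A) : 0 <=: w -> 0 <=: 1 - w ->
  u <=: z -> v <=: z -> w * u + (1 - w) * v <=: z.
Proof.
move=> hw hw' /subge0 hu /subge0 hv; apply/subge0.
have -> : z - (w * u + (1 - w) * v) = w * (z - u) + (1 - w) * (z - v) by ring.
by apply: bge0D; exact: bmul_ge0.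
Qed.

Lemma bmeet_add (x y z : A) : M (x + z) (y + z) = M x y + z.
Proof.
symmetry; apply: bmeet_unique; [exact/ble_add/bmeet_l | exact/ble_add/bmeet_r |].
move=> w h1 h2; rewrite -(subrK z w); apply: ble_add.
by apply: bmeet_glb; apply: (@ble_addK z); rewrite subrK.
Qed.

Lemma bmeet_opp (x y : A) : M x y = - J (- x) (- y).
Proof.
symmetry; apply: bmeet_unique.
- by rewrite -{2}(opprK x); apply: ble_opp; exact: bjoin_l.
- by rewrite -{2}(opprK y); apply: ble_opp; exact: bjoin_r.
move=> w h1 h2; rewrite -(opprK w); apply: ble_opp.
by apply: bjoin_lub; exact: ble_opp.
Qed.

Lemma bmeet_sum (x y : A) : M x y = x + y - J x y.
Proof.
symmetry; apply: bmeet_unique.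
- apply/subge0; have -> : x - (x + y - J x y) = J x y - y by ring.
  by apply/subge0; exact: bjoin_r.
- apply/subge0; have -> : y - (x + y - J x y) = J x y - x by ring.
  by apply/subge0; exact: bjoin_l.
move=> w /subge0 h1 /subge0 h2; apply/subge0.
have -> : x + y - J x y - w = (x + y - w) - J x y by ring.
apply/subge0; apply: bjoin_lub; apply/subge0.
- by have -> : x + y - w - x = y - w by ring.
- by have -> : x + y - w - y = x - w by ring.
Qed.

Lemma pos_neg (x : A) : bpos x - bneg x = x.
Proof.
have -> : - bneg x = M x 0 by rewrite bmeet_opp oppr0.
by rewrite bmeet_sum addr0 addrC subrK.
Qed.

Lemma pos_neg_disj (x : A) : M (bpos x) (bneg x) = 0.
Proof.
have h : M (bpos x) (bneg x) - bneg x = - bneg x.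
  by rewrite -bmeet_add subrr pos_neg bmeet_opp oppr0.
by move: h; rewrite -{2}(add0r (- bneg x)) => /addIr.
Qed.

Lemma babs_id (u : A) : 0 <=: u -> babs u = u.
Proof.
move=> h; apply: ble_anti; last exact: bjoin_l.
apply: bjoin_lub; first exact: ble_refl.
by apply: (ble_trans 0) => //; have := ble_opp h; rewrite oppr0.
Qed.

Lemma bneg_ge0 (y : A) : 0 <=: y -> bneg y = 0.
Proof. by move=> h; have := ble_opp h; rewrite oppr0. Qed.

Lemma bsc0 : sc 0 = 0.
Proof.
have := Defs.sc_add ax 0 0; rewrite addr0 => h.
by have := congr1 (fun t => t - sc 0) h; rewrite subrr addrK.
Qed.

Lemma bscD r s : sc (r + s) = sc r + sc s. Proof. exact: (Defs.sc_add ax). Qed.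
Lemma bscM r s : sc (r * s) = sc r * sc s. Proof. exact: (Defs.sc_mul ax). Qed.
Lemma bsc1 : sc 1 = 1. Proof. exact: (Defs.sc_one ax). Qed.

Lemma bscN r : sc (- r) = - sc r.
Proof. by apply/eqP; rewrite -subr_eq0 opprK -bscD addNr bsc0. Qed.

Lemma bscB r s : sc (r - s) = sc r - sc s.
Proof. by rewrite bscD bscN. Qed.

Lemma bscn n : sc n%:R = n%:R.
Proof. by elim: n => [|n IH]; [exact: bsc0 | rewrite -natr1 bscD IH bsc1 natr1]. Qed.

Lemma bscV r : r != 0 -> sc r^-1 * sc r = 1.
Proof. by move=> h; rewrite -bscM mulVf // bsc1. Qed.

Lemma bsc_ge0m (r : R) (x : A) : 0 <= r -> 0 <=: x -> 0 <=: sc r * x.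
Proof. exact: (Defs.le_scale ax). Qed.

(* Disjoint positive elements have product zero.  With u + v <= N one has
   0 <= uv/N <= u and uv/N <= v, so uv/N lies below u ∧ v = 0. *)
Lemma disj_mul0 (u v : A) : 0 <=: u -> 0 <=: v -> M u v = 0 -> u * v = 0.
Proof.
move=> hu hv huv; have [n hn] := bal_bounded ax (u + v).
set N : R := n.+1%:R; have N0 : N != 0 by rewrite pnatr_eq0.
have hN : u + v <=: sc N by rewrite /N bscn.
have Nge0 : 0 <= N^-1 by rewrite invr_ge0 ler0n.
have below_factor : forall a b, 0 <=: a -> 0 <=: b -> a + b <=: sc N ->
    sc N^-1 * (a * b) <=: a.
  move=> a b ha hb hab; apply/subge0.
  have hb' : b <=: sc N by apply: ble_trans hab; rewrite -{1}(add0r b); exact: ble_add.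
  have -> : a - sc N^-1 * (a * b) = sc N^-1 * (a * (sc N - b)).
    have ea : a = sc N^-1 * (a * sc N) by rewrite mulrCA bscV // mulr1.
    by rewrite {1}ea; ring.
  by apply: bsc_ge0m => //; apply: bmul_ge0 => //; exact/subge0.
have w0 : 0 <=: sc N^-1 * (u * v) by apply: bsc_ge0m => //; exact: bmul_ge0.
have wu : sc N^-1 * (u * v) <=: u by exact: below_factor.
have wv : sc N^-1 * (u * v) <=: v by rewrite [u * v]mulrC; apply: below_factor; rewrite // addrC.
have w00 : sc N^-1 * (u * v) = 0 by apply: ble_anti => //; rewrite -huv; exact: bmeet_glb.
by have := congr1 (fun t => sc N * t) w00; rewrite mulrA -bscM mulfV // bsc1 mul1r mulr0.
Qed.

(* Idempotents are positive: e = e^+ - e^- with e^+ e^- = 0, and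
   e = e^2 = (e^+)^2 + (e^-)^2 forces e^- <= e^+, hence e^- = e^- ∧ e^+ = 0. *)
Lemma idem_ge0 (e : A) : e * e = e -> 0 <=: e.
Proof.
move=> he; set p := bpos e; set q := bneg e.
have hp : 0 <=: p by exact: bjoin_r.
have hq : 0 <=: q by exact: bjoin_r.
have epq : e = p - q by rewrite pos_neg.
have pq0 : p * q = 0 by apply: disj_mul0 => //; exact: pos_neg_disj.
have sq : p * p + q * q = p - q.
  have -> : p * p + q * q = (p - q) * (p - q) + (p * q) *+ 2 by ring.
  by rewrite -epq he pq0 mul0rn addr0.
have qp : q <=: p by apply/subge0; rewrite -sq; apply: bge0D; exact: bmul_ge0.
have q0 : q = 0.
  apply: ble_anti => //.
  by move: (bmeet_glb qp (ble_refl q)); rewrite pos_neg_disj.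
by rewrite epq q0 subr0.
Qed.

Lemma one_ge0 : 0 <=: (1 : A).
Proof. exact/idem_ge0/mulr1. Qed.

Lemma bsc_ge0 r : 0 <= r -> 0 <=: sc r.
Proof. by move=> h; rewrite -(mulr1 (sc r)); apply: bsc_ge0m => //; exact: one_ge0. Qed.

Lemma bsc_le r r' : r <= r' -> sc r <=: sc r'.
Proof. by move=> h; apply/subge0; rewrite -bscB; apply: bsc_ge0; rewrite subr_ge0. Qed.

Lemma bsc_le_refl (u v : R) : (1 : A) != 0 -> sc u <=: sc v -> u <= v.
Proof.
move=> h10 h; rewrite leNgt; apply/negP => hvu.
have d0 : 0 < u - v by rewrite subr_gt0.
have : 0 <=: sc (u - v)^-1 * (- sc (u - v)).
  by apply: bsc_ge0m; [rewrite invr_ge0 ltW | rewrite bscB opprB; exact/subge0].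
rewrite mulrN bscV ?gt_eqF // => h1.
have h2 : (1 : A) <=: 0 by have := ble_opp h1; rewrite opprK oppr0.
by move/negP: h10; apply; apply/eqP; apply: ble_anti => //; exact: one_ge0.
Qed.

Lemma zero_arch : arch_ideal (fun y : A => y = 0).
Proof.
split; first split.
- by [].
- by move=> ? ? -> ->; rewrite addr0.
- by move=> ? ? ->; rewrite mulr0.
- move=> u v h hv; move: h; rewrite hv /babs oppr0 bjoinxx => h.
  have h1 : u <=: 0 := ble_trans _ (bjoin_l u (- u)) h.
  have h2 : - u <=: 0 := ble_trans _ (bjoin_r u (- u)) h.
  by apply: ble_anti => //; have := ble_opp h2; rewrite opprK oppr0.
- move=> u v h; rewrite subr0; apply: (bal_archimedean ax (y := v)) => n.
  by apply/eqP; rewrite -subr_eq0; apply/eqP.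
Qed.

Lemma full_arch : arch_ideal (fun y : A => True).
Proof. by split; first split. Qed.

(* An ℓ-ideal containing a positive element above a positive real is the
   whole algebra: it then contains that real, hence the unit. *)
Lemma l_ideal_full (I : A -> Prop) (b : A) (d : R) :
  l_ideal I -> I b -> 0 < d -> sc d <=: b -> forall y, I y.
Proof.
move=> [_ _ hmul hconv] hb d0 hdb y.
have hd0 : 0 <=: sc d by apply: bsc_ge0; exact: ltW.
have hId : I (sc d).
  by apply: (hconv _ b) hb; rewrite !babs_id //; exact: ble_trans hdb.
have hI1 : I 1 by have := hmul (sc d^-1) _ hId; rewrite bscV // gt_eqF.
by have := hmul y _ hI1; rewrite mulr1.
Qed.

End BalOrder.
Arguments ble_trans {R A} y {x z}.

Section Alpha.
Variables (R : realType) (A : balAlg R) (dB : Order.disp_t) (B : ctbDistrLatticeType dB)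
  (e : archT A -> B) (RB : balAlg R) (x : B -> RB) (D : balAlg R) (j : RB -> D).
Hypotheses (He : free_bool_ext e) (Hx : is_RB x) (Hj : is_dedekind_completion j).

Lemma e_bot (K : archT A) : (forall y, sval K y <-> y = 0) -> e K = \bot%O.
Proof. by case: He => _ [_ _ h _] _ _; apply: h. Qed.

Lemma e_top (K : archT A) : (forall y, sval K y) -> e K = \top%O.
Proof. by case: He => _ [_ _ _ h] _ _; apply: h. Qed.

Lemma jD u v : j (u + v) = j u + j v.
Proof. by case: Hj => _ [_ [h _ _]]. Qed.

Lemma jM u v : j (u * v) = j u * j v.
Proof. by case: Hj => _ [_ [_ h _]]. Qed.

Lemma j1 : j 1 = 1.
Proof. by case: Hj => _ [_ [_ _ h]]. Qed.

Lemma jsc r : j (bsc RB r) = bsc D r.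
Proof. by case: Hj => _ _ h. Qed.

Lemma j0 : j 0 = 0.
Proof. by apply: (addIr (j 0)); rewrite -jD !add0r. Qed.

Lemma jB u v : j (u - v) = j u - j v.
Proof. by apply: (addIr (j v)); rewrite -jD subrK addrNK. Qed.

Definition X (f : B) : D := j (x f).

Lemma X_idem f : X f * X f = X f.
Proof. by case: Hx => [[h _ _ _] _]; rewrite /X -jM -h meetxx. Qed.

Lemma X_ge0 f : 0 <=: X f.
Proof. exact/idem_ge0/X_idem. Qed.

Lemma X_compl f : X (~` f)%O = 1 - X f.
Proof. by case: Hx => [[_ _ h _] _]; rewrite /X h jB j1. Qed.

Lemma X_le1 f : 0 <=: 1 - X f.
Proof. by rewrite -X_compl; exact: X_ge0. Qed.

Lemma X_bot : X \bot%O = 0.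
Proof. by case: Hx => [[_ _ _ h] _]; rewrite /X h j0. Qed.

Lemma X_top : X \top%O = 1.
Proof. by rewrite -Order.CTBDistrLatticeTheory.compl0 X_compl X_bot subr0. Qed.

Lemma alpha_elt r f : j (bsc RB r * x f) = bsc D r * X f.
Proof. by rewrite jM jsc. Qed.

Definition zero_ideal : archT A := exist _ (fun y : A => y = 0) (zero_arch A).

Lemma alpha_set_const a s r : 0 <=: a + bsc A s - bsc A r ->
  alpha_set e x j a s (bsc D r).
Proof.
move=> h; exists r, zero_ideal; split; first by rewrite /= bneg_ge0.
by rewrite alpha_elt (@e_bot zero_ideal) // Order.CTBDistrLatticeTheory.compl0 X_top mulr1.
Qed.

(* Reindexing: r X_I is in S_s' iff (r - (s' - s)) X_I is in S_s. *)
Lemma alpha_set_shift a s s' r : a + bsc A s' - bsc A r = a + bsc A s - bsc A (r - (s' - s)).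
Proof. by rewrite !bscB; ring. Qed.

(* Upper half of the shift: every r X_I of S_s' is at most t + (r - t) X_I. *)
Lemma alpha_join_shift_le a s s' z z' : s <= s' ->
  isJoin (alpha_set e x j a s) z -> isJoin (alpha_set e x j a s') z' ->
  z' <=: bsc D (s' - s) + z.
Proof.
move=> hss [hz _] [_ hz']; set t := s' - s.
apply: hz' => y [r [I [hI ->]]]; rewrite alpha_elt; set Xi := X (~` e I)%O.
have hS : alpha_set e x j a s (bsc D (r - t) * Xi).
  by exists (r - t), I; split; [rewrite -alpha_set_shift | rewrite alpha_elt].
have /subge0 h1 := hz _ hS; apply/subge0.
have -> : bsc D t + z - bsc D r * Xi =
    (z - bsc D (r - t) * Xi) + bsc D t * (1 - Xi) by rewrite (@bscB _ D r t); ring.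
apply: bge0D => //; apply: bsc_ge0m; [by rewrite subr_ge0 | exact: X_le1].
Qed.

(* Lower half: q X_I in S_s gives (q + t) X_I in S_s', while t is in S_s';
   so q X_I + t = X_I ((q + t) X_I) + (1 - X_I) t is below z'. *)
Lemma alpha_join_shift_ge a s s' z z' : s <= s' -> 0 <=: a + bsc A s ->
  isJoin (alpha_set e x j a s) z -> isJoin (alpha_set e x j a s') z' ->
  bsc D (s' - s) + z <=: z'.
Proof.
move=> hss hs [_ hz] [hz' _]; set t := s' - s.
suff hzt : z <=: z' - bsc D t by have := ble_addl (bsc D t) hzt; rewrite [bsc D t + (_ - _)]addrC subrK.
apply: hz => y [q [I [hI ->]]]; rewrite alpha_elt; set Xi := X (~` e I)%O.
have h1 : bsc D (q + t) * Xi <=: z'.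
  apply: hz'; exists (q + t), I; split; last by rewrite alpha_elt.
  by rewrite (alpha_set_shift a s) addrK.
have h2 : bsc D t <=: z'.
  by apply/hz'/alpha_set_const; rewrite (alpha_set_shift _ s) subrr (@bsc0 _ A) subr0.
have := mix_le (X_ge0 (~` e I)%O) (X_le1 (~` e I)%O) h1 h2; rewrite -/Xi.
have -> : Xi * (bsc D (q + t) * Xi) + (1 - Xi) * bsc D t = bsc D q * Xi + bsc D t.
  by rewrite mulrCA X_idem -/Xi (@bscD _ D q t); ring.
by move/(ble_add (- bsc D t)); rewrite addrK.
Qed.

Lemma alpha_join_shift a s s' z z' : s <= s' -> 0 <=: a + bsc A s ->
  isJoin (alpha_set e x j a s) z -> isJoin (alpha_set e x j a s') z' ->
  z' = bsc D (s' - s) + z.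
Proof.
move=> hss hs hz hz'; apply: ble_anti.
- exact: alpha_join_shift_le hz hz'.
- exact: alpha_join_shift_ge hz hz'.
Qed.

(* If A is trivial, so is D: the zero ideal is then the whole algebra,
   which is sent both to the bottom and to the top of B. *)
Lemma trivial_D : (1 : A) = 0 -> forall d : D, d = 0.
Proof.
move=> h10 d; pose K : archT A := exist _ (fun _ : A => True) (full_arch A).
have hKb : e K = \bot%O by apply: e_bot => y; split=> // _; rewrite -(mulr1 y) h10 mulr0.
have h : (1 : D) = 0 by rewrite -X_top -(@e_top K) // hKb X_bot.
by rewrite -(mulr1 d) h mulr0.
Qed.

(* S_s is bounded by c = ||a|| + s + 1.  Since a + s >= 0 we have c > 0, and
   r X_I <= max(r, 0) <= c when r <= c; when r > c, pick rho with |a| <= rho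
   < ||a|| + 1: then (a + s - r)^- >= r - s - rho > 0, so I = A and X_I = 0. *)
Lemma alpha_set_bound a s : 0 <=: a + bsc A s ->
  forall y, alpha_set e x j a s y -> y <=: bsc D (bnorm a + s + 1).
Proof.
move=> hs y hy; have [h10|h10] := eqVneq (1 : A) 0.
  by have hD := trivial_D h10; rewrite (hD y) (hD (bsc D _)); exact: ble_refl.
set E : set R := fun r => babs a <=: bsc A r.
have hE0 : (E !=set0)%classic.
  by have [n hn] := bal_bounded (bal_axioms A) (babs a); exists n.+1%:R; rewrite /E /= bscn.
have hlb : lbound E (- s).
  move=> r Er; apply: (bsc_le_refl h10); apply: (ble_trans (babs a) _ Er).
  apply: (ble_trans a _ (bjoin_l a (- a))).
  by rewrite bscN; apply/subge0; rewrite opprK.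
have hinf : - s <= bnorm a by apply: lb_le_inf.
set c := bnorm a + s + 1; have c0 : 0 <= c by rewrite /c; lra.
have hc0 : 0 <=: bsc D c := bsc_ge0 D c0.
case: hy => r [I [hI ->]]; rewrite alpha_elt; set Xi := X (~` e I)%O.
have [hrc|hcr] := lerP r c.
  have [hr0|hr0] := lerP 0 r.
    apply: (ble_trans (bsc D r)); last exact: bsc_le.
    apply/subge0; have -> : bsc D r - bsc D r * Xi = bsc D r * (1 - Xi) by ring.
    by apply: bsc_ge0m => //; exact: X_le1.
  apply: (ble_trans 0) => //; apply/subge0.
  by rewrite sub0r -mulNr -bscN; apply: bsc_ge0m; [lra | exact: X_ge0].
have [rho Erho hrho] := inf_adherent (@ltr01 R) (conj hE0 (ex_intro _ _ hlb)).
have d0 : 0 < r - s - rho by rewrite /c /bnorm in hcr *; lra.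
have hdb : bsc A (r - s - rho) <=: bneg (a + bsc A s - bsc A r).
  apply: (ble_trans _ _ (bjoin_l _ _)); apply/subge0.
  have -> : - (a + bsc A s - bsc A r) - bsc A (r - s - rho) = bsc A rho - a.
    by rewrite !bscB; ring.
  by apply/subge0; exact: ble_trans (bjoin_l a (- a)) Erho.
have hIall := l_ideal_full (proj1 (svalP I)) hI d0 hdb.
by rewrite /Xi (e_top hIall) Order.CTBDistrLatticeTheory.compl1 X_bot mulr0.
Qed.

End Alpha.

Theorem mainTheorem5 (R : realType) (A : balAlg R)
    (dB : Order.disp_t) (B : ctbDistrLatticeType dB) (e : archT A -> B)
    (RB : balAlg R) (x : B -> RB) (D : balAlg R) (j : RB -> D) :
  free_bool_ext e -> is_RB x -> is_dedekind_completion j ->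
  (forall (a : A) (s : R), ble 0 (a + bsc A s) ->
     (forall y, alpha_set e x j a s y -> ble y (bsc D (bnorm a + s + 1))) /\
     (exists z, isJoin (alpha_set e x j a s) z)) /\
  (forall (a : A) (s s' : R) (z z' : D),
     ble 0 (a + bsc A s) -> ble 0 (a + bsc A s') ->
     isJoin (alpha_set e x j a s) z -> isJoin (alpha_set e x j a s') z' ->
     - bsc D s + z = - bsc D s' + z').
Proof.
move=> He Hx Hj; split.
- move=> a s hs; have hbound := alpha_set_bound He Hx Hj hs.
  have [complete _ _ _ _] := Hj; split=> //; apply: complete.
  + by exists (bsc D 0); apply: (alpha_set_const He Hx Hj); rewrite bsc0 subr0.
  + by exists (bsc D (bnorm a + s + 1)).
- move=> a s s' z z' hs hs' hz hz'.
  have [hss'|hs's] := lerP s s'.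
  + by rewrite (alpha_join_shift He Hx Hj hss' hs hz hz') (@bscB _ D); ring.
  + by rewrite (alpha_join_shift He Hx Hj (ltW hs's) hs' hz' hz) (@bscB _ D); ring.
Qed.
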